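(* Let $\rho,\sigma$ be quantum states, $r\ge0$, $\eta\in(0,1]$, and let $\beta^r(\rho,\sigma)=\sup_{M\in\mathcal M^r}|\operatorname{tr}(M(\rho-\sigma))|$. If $\beta^r(\rho,\sigma)<\eta$, then $D^{r,\eta}_H(\rho\|\sigma)\le-\log\big(1-\beta^r(\rho,\sigma)/\eta\big)$. Furthermore, let $\delta\ge0$ and $|\psi\rangle$ a pure state in a Hilbert space of dimension $d$, with strong complexity $C^\delta_{\mathrm{strong}}(|\psi\rangle)=\inf\{r\ge0:\beta^r(\psi,\pi)\ge1-1/d-\delta\}$, $\pi=\mathbb 1/d$, $\psi=|\psi\rangle\langle\psi|$. If $r<C^\delta_{\mathrm{strong}}(|\psi\rangle)$ and $\eta>1-d^{-1}-\delta$, then with $c=(1-d^{-1}-\delta)/\eta<1$, $$H^{r,\eta}_H(\psi)>\log d-\log\frac1{1-c}.$$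
   Context: All logarithms are natural; POVM effect = operator $0\le Q\le\mathbb 1$. $\{\mathcal M^r\}_{r\ge0}$ is a family of sets of POVM effects on the $d$-dimensional system with $\mathbb 1\in\mathcal M^0$ and $\mathcal M^r\subseteq\mathcal M^{r'}$ for $r\le r'$. Complexity relative entropy: $D^{r,\eta}_H(\rho\|\Gamma)=-\log\inf\{\operatorname{tr}(Q\Gamma)/\operatorname{tr}(Q\rho): Q\in\mathcal M^r,\ \operatorname{tr}(Q\rho)\ge\eta\}$; complexity entropy $H^{r,\eta}_H(\rho)=-D^{r,\eta}_H(\rho\|\mathbb 1)$. *)

From mathcomp Require Import all_boot all_order all_algebra.
From mathcomp Require Import all_classical all_reals all_analysis.
From mathcomp.real_closed Require Import complex.
Set Implicit Arguments. Unset Strict Implicit. Unset Printing Implicit Defensive.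
Import Order.TTheory GRing.Theory Num.Theory.
Local Open Scope ring_scope.
Local Open Scope classical_set_scope.

Section QDefs.
Variable R : realType.
Local Notation C := R[i].
Variable d : nat.

Definition psdmx (A : 'M[C]_d) : Prop :=
  (forall i j, A j i = (A i j)^*) /\
  (forall v : 'rV[C]_d, 0 <= \sum_i \sum_j (v 0 i)^* * A i j * v 0 j).

Definition povm_effect (Q : 'M[C]_d) : Prop := psdmx Q /\ psdmx (1%:M - Q).

Definition qstate (rho : 'M[C]_d) : Prop := psdmx rho /\ \tr rho = 1.

(* tr(Q A), a real number for Hermitian Q, A (we take the real part) *)
Definition trR (Q A : 'M[C]_d) : R := complex.Re (\tr (Q *m A)).

Definition elog (x : \bar R) : \bar R :=
  match x with
  | EFin y => if (0 < y)%R then (ln y)%:E else -oo%E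
  | +oo%E => +oo%E
  | -oo%E => -oo%E
  end.

Definition DH (M : R -> set 'M[C]_d) (r eta : R) (rho Gamma : 'M[C]_d) : \bar R :=
  oppe (elog (ereal_inf [set (trR Q Gamma / trR Q rho)%:E
                     | Q in [set Q | M r Q /\ eta <= trR Q rho]])).

Definition HH (M : R -> set 'M[C]_d) (r eta : R) (rho : 'M[C]_d) : \bar R :=
  oppe (DH M r eta rho 1%:M).

Definition betar (M : R -> set 'M[C]_d) (r : R) (rho sigma : 'M[C]_d) : R :=
  sup [set `|trR Q (rho - sigma)| | Q in M r].

Definition maxmixed : 'M[C]_d := (d%:R)^-1 *: 1%:M.

Definition proj_pure (v : 'rV[C]_d) : 'M[C]_d := \matrix_(i, j) (v 0 i * (v 0 j)^*).

Definition unit_vec (v : 'rV[C]_d) : Prop := \sum_i (v 0 i * (v 0 i)^*) = 1.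

Definition Cstrong (M : R -> set 'M[C]_d) (delta : R) (v : 'rV[C]_d) : \bar R :=
  ereal_inf [set r%:E | r in [set r | 0 <= r /\
              1 - (d%:R)^-1 - delta <= betar M r (proj_pure v) maxmixed]].

Definition complexity_family (M : R -> set 'M[C]_d) : Prop :=
  (forall r Q, 0 <= r -> M r Q -> povm_effect Q) /\
  M 0 1%:M /\
  (forall r r', 0 <= r -> r <= r' -> M r `<=` M r').

End QDefs.

(* If Q is a test in M^r with tr(Q rho) >= eta, then
   tr(Q sigma) >= tr(Q rho) - beta >= (1 - beta/eta) tr(Q rho), so every ratio in the
   infimum defining D_H is at least 1 - beta/eta, and the first bound follows because
   log is monotone; rho and sigma need not be states.  For a pure state psi,
   r < C_strong forces beta^r(psi, 1/d) < 1 - 1/d - delta, and the same estimate with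
   sigma = 1/d gives tr Q / tr(Q psi) >= d (1 - beta/eta) > d (1 - c).
   The only technical point is that beta^r is the supremum of a set bounded above,
   which holds because the entries of a POVM effect are bounded. *)
From mathcomp Require Import all_boot all_order all_algebra.
From mathcomp Require Import all_classical all_reals all_analysis.
From mathcomp.real_closed Require Import complex.
From mathcomp Require Import lra.
Set Implicit Arguments. Unset Strict Implicit. Unset Printing Implicit Defensive.
Import Order.TTheory GRing.Theory Num.Theory.
Local Open Scope ring_scope.
Local Open Scope classical_set_scope.

Section EffectBounds.
Variable R : realType.
Local Notation C := R[i].
Variable d : nat.

Definition basis_comb (i j : 'I_d) (u : C) : 'rV[C]_d :=
  \row_k ((k == i)%:R + u * (k == j)%:R).

Lemma sum_mul_basis_comb (F : 'I_d -> C) i j u :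
  \sum_l F l * ((l == i)%:R + u * (l == j)%:R) = F i + F j * u.
Proof.
under eq_bigr do rewrite mulrDr.
rewrite big_split /=; congr (_ + _).
  rewrite (bigD1 i) //= eqxx mulr1 big1 ?addr0 // => l /negbTE ->.
  by rewrite mulr0.
rewrite (bigD1 j) //= eqxx mulr1 big1 ?addr0 // => l /negbTE ->.
by rewrite !mulr0.
Qed.

Lemma quad_form_basis_comb (A : 'M[C]_d) i j u :
  \sum_k \sum_l (basis_comb i j u 0 k)^* * A k l * basis_comb i j u 0 l
  = A i i + A i j * u + u^* * (A j i + A j j * u).
Proof.
under eq_bigr => k _.
  under eq_bigr => l _ do rewrite !mxE -mulrA.
  rewrite -mulr_sumr sum_mul_basis_comb rmorphD rmorphM /= !rmorph_nat mulrC.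
over.
by rewrite (sum_mul_basis_comb (fun k => _)) [_ * u^*]mulrC.
Qed.

Lemma psdmx_basis_comb_ge0 (A : 'M[C]_d) i j u : psdmx A ->
  0 <= complex.Re (A i i + A i j * u + u^* * (A j i + A j j * u)).
Proof. by case=> _ /(_ (basis_comb i j u)); rewrite quad_form_basis_comb lecE => /andP[]. Qed.

Lemma Re_mul (x y : C) :
  complex.Re (x * y) = complex.Re x * complex.Re y - complex.Im x * complex.Im y.
Proof. by case: x y => [a b] [c e]; simpc. Qed.

(* Both Q and 1 - Q are tested against the vectors e_i + u e_j for u = 0, 1, -1, i. *)
Lemma povm_effect_entry_bounded (Q : 'M[C]_d) i j : povm_effect Q ->
  `|complex.Re (Q i j)| <= 2 /\ `|complex.Im (Q i j)| <= 2.
Proof.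
move=> [PQ PIQ].
have A1 := psdmx_basis_comb_ge0 i j 1 PQ.
have A2 := psdmx_basis_comb_ge0 i j (-1) PQ.
have A3 := psdmx_basis_comb_ge0 i j 'i%C PQ.
have A4 := psdmx_basis_comb_ge0 i j 0 PQ.
have A5 := psdmx_basis_comb_ge0 j j 0 PQ.
have B1 := psdmx_basis_comb_ge0 i j 1 PIQ.
have B2 := psdmx_basis_comb_ge0 i j (-1) PIQ.
have B3 := psdmx_basis_comb_ge0 i j 'i%C PIQ.
have B4 := psdmx_basis_comb_ge0 i j 0 PIQ.
have B5 := psdmx_basis_comb_ge0 j j 0 PIQ.
move: A1 A2 A3 A4 A5 B1 B2 B3 B4 B5.
rewrite !mxE (PQ.1 i j) eqxx [j == i]eq_sym.
move: (Q i j) (Q i i) (Q j j) => [a b] [p p'] [s s'].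
by case: (i == j) => /=; simpc => /= *;
  split; rewrite ler_norml; apply/andP; split; lra.
Qed.

Definition effect_trace_bound (A : 'M[C]_d) : R :=
  \sum_i \sum_j 2 * (`|complex.Re (A j i)| + `|complex.Im (A j i)|).

Lemma norm_trR_le (Q A : 'M[C]_d) : povm_effect Q ->
  `|trR Q A| <= effect_trace_bound A.
Proof.
move=> PQ; rewrite /trR /mxtrace.
under eq_bigr do rewrite mxE.
rewrite raddf_sum; apply: le_trans (ler_norm_sum _ _ _) _.
apply: ler_sum => i _; rewrite raddf_sum; apply: le_trans (ler_norm_sum _ _ _) _.
apply: ler_sum => j _ /=; rewrite Re_mul.
apply: le_trans (ler_normB _ _) _; rewrite !normrM.
have [hRe hIm] := povm_effect_entry_bounded i j PQ.
have := normr_ge0 (complex.Re (A j i)); have := normr_ge0 (complex.Im (A j i)).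
nra.
Qed.

Lemma trRB (Q A B : 'M[C]_d) : trR Q (A - B) = trR Q A - trR Q B.
Proof. by rewrite /trR mulmxBr !raddfB. Qed.

Lemma trR_maxmixed (Q : 'M[C]_d) : trR Q (maxmixed R d) = trR Q 1%:M / d%:R.
Proof.
rewrite /trR /maxmixed -scalemxAr mxtraceZ mulmx1.
have -> : (d%:R : C)^-1 = ((d%:R : R)^-1)%:C%C by rewrite fmorphV /= rmorph_nat.
by case: (\tr Q) => a b; simpc; rewrite mulrC.
Qed.

End EffectBounds.

Lemma unit_vec_dim_gt0 (R : realType) (d : nat) (v : 'rV[R[i]]_d) :
  unit_vec v -> (0 < d)%N.
Proof.
by case: d v => [|n] // v; rewrite /unit_vec big_ord0 => /eqP; rewrite eq_sym oner_eq0.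
Qed.

Lemma ln_le_elog (R : realType) (L : R) (x : \bar R) :
  0 < L -> (L%:E <= x)%E -> ((ln L)%:E <= elog x)%E.
Proof.
move=> L_gt0; case: x => [y| |] //= => [|_]; last by rewrite leey.
rewrite lee_fin => Ly; have y_gt0 : 0 < y := lt_le_trans L_gt0 Ly.
by rewrite y_gt0 lee_fin ler_ln ?posrE.
Qed.

Lemma DH_le_ln (R : realType) (d : nat) (M : R -> set 'M[R[i]]_d)
    (r eta L : R) (rho Gamma : 'M[R[i]]_d) :
  0 < eta -> 0 < L ->
  (forall Q, M r Q -> eta <= trR Q rho -> L * trR Q rho <= trR Q Gamma) ->
  (DH M r eta rho Gamma <= (- ln L)%:E)%E.
Proof.
move=> eta_gt0 L_gt0 ratio_ge; rewrite /DH EFinN leeN2.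
apply: ln_le_elog => //; apply/ereal_infP => _ [Q [MQ etaQ] <-].
by rewrite lee_fin ler_pdivlMr ?ratio_ge // (lt_le_trans eta_gt0).
Qed.

Section ComplexityFamily.
Variable R : realType.
Variable d : nat.
Variable M : R -> set 'M[R[i]]_d.
Hypothesis HM : complexity_family M.
Variable r : R.
Hypothesis r_ge0 : 0 <= r.

Lemma norm_trR_le_betar (rho sigma Q : 'M[R[i]]_d) :
  M r Q -> `|trR Q (rho - sigma)| <= betar M r rho sigma.
Proof.
have [M_effect _] := HM.
move=> MQ; apply: sup_upper_bound; last by exists Q.
split; first by exists `|trR Q (rho - sigma)|, Q.
exists (effect_trace_bound (rho - sigma)) => _ [Q' MQ' <-].
exact: norm_trR_le (M_effect _ _ r_ge0 MQ').
Qed.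

Lemma betar_ge0 (rho sigma : 'M[R[i]]_d) : 0 <= betar M r rho sigma.
Proof.
have [_ [M0_1 M_mono]] := HM.
have Mr_1 : M r 1%:M := M_mono _ _ (lexx 0) r_ge0 _ M0_1.
exact: le_trans (normr_ge0 _) (norm_trR_le_betar rho sigma Mr_1).
Qed.

Lemma trR_ge_betar (rho sigma Q : 'M[R[i]]_d) (eta : R) :
  0 < eta -> M r Q -> eta <= trR Q rho ->
  (1 - betar M r rho sigma / eta) * trR Q rho <= trR Q sigma.
Proof.
move=> eta_gt0 MQ etaQ; set b := betar M r rho sigma.
have b_ge0 : 0 <= b := betar_ge0 rho sigma.
have /ler_normlP[_] := norm_trR_le_betar rho sigma MQ; rewrite trRB -/b => diff_le.
have : b <= b / eta * trR Q rho.
  rewrite -[leLHS](divfK (lt0r_neq0 eta_gt0)).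
  by apply: ler_wpM2l; rewrite // divr_ge0 // ltW.
lra.
Qed.

Lemma betar_lt_of_lt_Cstrong (delta : R) (v : 'rV[R[i]]_d) :
  (r%:E < Cstrong M delta v)%E ->
  betar M r (proj_pure v) (maxmixed R d) < 1 - d%:R^-1 - delta.
Proof.
move=> r_lt_C; rewrite ltNge; apply/negP => beta_ge.
suff : (Cstrong M delta v <= r%:E)%E by rewrite leNgt r_lt_C.
by apply: ereal_inf_lbound; exists r.
Qed.

Lemma DH_le_betar (rho sigma : 'M[R[i]]_d) (eta : R) :
  0 < eta -> betar M r rho sigma < eta ->
  (DH M r eta rho sigma <= (- ln (1 - betar M r rho sigma / eta))%:E)%E.
Proof.
move=> eta_gt0 beta_lt; apply: DH_le_ln => //; last by move=> Q; apply: trR_ge_betar.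
by rewrite subr_gt0 ltr_pdivrMr // mul1r.
Qed.

Lemma ln_le_HH_pure (v : 'rV[R[i]]_d) (eta : R) : (0 < d)%N -> 0 < eta ->
  betar M r (proj_pure v) (maxmixed R d) < eta ->
  ((ln (d%:R * (1 - betar M r (proj_pure v) (maxmixed R d) / eta)))%:E
     <= HH M r eta (proj_pure v))%E.
Proof.
move=> d_gt0 eta_gt0 beta_lt; rewrite /HH leeNr -EFinN.
apply: DH_le_ln => [//||Q MQ etaQ].
  by rewrite mulr_gt0 ?ltr0n // subr_gt0 ltr_pdivrMr // mul1r.
have := trR_ge_betar (maxmixed R d) eta_gt0 MQ etaQ.
by rewrite trR_maxmixed ler_pdivlMr ?ltr0n // mulrC mulrA.
Qed.

End ComplexityFamily.

Theorem propositionD14 (R : realType) (d : nat) (M : R -> set 'M[R[i]]_d) :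
  complexity_family M ->
  (forall (rho sigma : 'M[R[i]]_d) (r eta : R),
     qstate rho -> qstate sigma -> 0 <= r -> 0 < eta <= 1 ->
     betar M r rho sigma < eta ->
     (DH M r eta rho sigma <= (- ln (1 - betar M r rho sigma / eta))%:E)%E) /\
  (forall (delta r eta : R) (v : 'rV[R[i]]_d),
     0 <= delta -> unit_vec v -> 0 <= r -> 0 < eta <= 1 ->
     (r%:E < Cstrong M delta v)%E ->
     1 - (d%:R)^-1 - delta < eta ->
     let c := (1 - (d%:R)^-1 - delta) / eta in
     ((ln (d%:R : R) - ln (1 - c)^-1)%:E < HH M r eta (proj_pure v))%E).
Proof.
move=> HM; split=> [rho sigma r eta _ _ r_ge0 /andP[eta_gt0 _]|].
  exact: DH_le_betar.
move=> delta r eta v _ v_unit r_ge0 /andP[eta_gt0 _] r_lt_C a_lt_eta.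
cbv zeta; set c := (1 - _ - delta) / eta.
have d_gt0 := unit_vec_dim_gt0 v_unit.
have beta_lt_a := betar_lt_of_lt_Cstrong r_ge0 r_lt_C.
set b := betar M r (proj_pure v) (maxmixed R d) in beta_lt_a.
have b_lt_c : b / eta < c by rewrite ltr_pM2r ?invr_gt0.
have c_lt1 : c < 1 by rewrite ltr_pdivrMr // mul1r.
apply: lt_le_trans (ln_le_HH_pure HM r_ge0 d_gt0 eta_gt0 (lt_trans beta_lt_a a_lt_eta)).
have d_pos : 0 < d%:R :> R by rewrite ltr0n.
rewrite lte_fin lnV ?posrE ?subr_gt0 // opprK -lnM ?posrE ?subr_gt0 //.
by rewrite ltr_ln ?posrE ?mulr_gt0 ?subr_gt0 ?(lt_trans b_lt_c) // ltr_pM2l // ltrD2l ltrN2.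
Qed.
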